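(* Let $M\in\mathrm{SL}(3,\mathbb R)$, $\mathcal D=\mathbb S_1^1$, $K=\mathcal G_{\mathcal D}(M)$, and let $(u_1,\vec v_1),\dots,(u_K,\vec v_K)\in\mathcal Q_{\mathcal D}(M)$ satisfy (V1)–(V3) and $u_i\ge0$ for all $i$. Then for all $1\le i<j\le K-1$ the angle between $\vec v_i$ and $\vec v_j$ is greater than $\pi/3$. Moreover, for all $1\le i<j<k\le K-1$, the vector $\vec v_i$ does not lie in the positive cone $\{a\vec v_j+b\vec v_k: a,b\ge0\}$ determined by $\vec v_j$ and $\vec v_k$.
   Context: Row vectors in $\mathbb R^3$ are written $(u,\vec v)$, $u\in\mathbb R$, $\vec v\in\mathbb R^2$; $\mathbb Z^3M=\{\vec mM:\vec m\in\mathbb Z^3\}$. For $\mathcal D\subseteq\mathbb S_1^1$ (unit circle): $\mathcal Q_{\mathcal D}(M,t)=\{(u,\vec v)\in\mathbb Z^3M:-t<u<1-t,\ \vec v\in\mathbb R_{>0}\mathcal D\}$ for $t\in(0,1)$; $\mathcal Q_{\mathcal D}(M)=\{(u,\vec v)\in\mathbb Z^3M:|u|<1,\ \vec v\in\mathbb R_{>0}\mathcal D\}$; $F_{\mathcal D}(M,t)=\min\{|\vec v|:(u,\vec v)\in\mathcal Q_{\mathcal D}(M,t)\}$; $\mathcal F_{\mathcal D}(M)=\{F_{\mathcal D}(M,t):0<t<1\}$ and $\mathcal G_{\mathcal D}(M)=|\mathcal F_{\mathcal D}(M)|$. Conditions: (V1) $0<|\vec v_1|<\cdots<|\vec v_K|$;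 (V2) each $\delta\in\mathcal F_{\mathcal D}(M)$ equals $|\vec v_i|$ for some $i$; (V3) for each $i$ there is $t\in(0,1)$ with $(u_i,\vec v_i)\in\mathcal Q_{\mathcal D}(M,t)$ and $|\vec v_i|=F_{\mathcal D}(M,t)$. *)

From Stdlib Require Import Reals Lra ZArith List.
Open Scope R_scope.

(* Points of R^3 written (u, v) with u : R, v : R^2 = R*R. *)
Definition R2 := (R * R)%type.
Definition pt := (R * R2)%type.

(* A 3x3 real matrix, entries M i j for i, j in {0,1,2}. *)
Definition mat3 := nat -> nat -> R.

Definition det3 (M : mat3) : R :=
  M 0%nat 0%nat * (M 1%nat 1%nat * M 2%nat 2%nat - M 1%nat 2%nat * M 2%nat 1%nat)
  - M 0%nat 1%nat * (M 1%nat 0%nat * M 2%nat 2%nat - M 1%nat 2%nat * M 2%nat 0%nat)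
  + M 0%nat 2%nat * (M 1%nat 0%nat * M 2%nat 1%nat - M 1%nat 1%nat * M 2%nat 0%nat).

Definition SL3 (M : mat3) : Prop := det3 M = 1.

Definition rowmul (m0 m1 m2 : R) (M : mat3) (j : nat) : R :=
  m0 * M 0%nat j + m1 * M 1%nat j + m2 * M 2%nat j.

Definition in_lattice (M : mat3) (p : pt) : Prop :=
  exists m0 m1 m2 : Z,
    p = (rowmul (IZR m0) (IZR m1) (IZR m2) M 0%nat,
         (rowmul (IZR m0) (IZR m1) (IZR m2) M 1%nat,
          rowmul (IZR m0) (IZR m1) (IZR m2) M 2%nat)).

Definition dot2 (v w : R2) : R := fst v * fst w + snd v * snd w.
Definition norm2 (v : R2) : R := sqrt (dot2 v v).

Definition unit_circle (d : R2) : Prop := norm2 d = 1.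

Definition in_cone (D : R2 -> Prop) (v : R2) : Prop :=
  exists r d, 0 < r /\ D d /\ v = (r * fst d, r * snd d).

Definition Qt (D : R2 -> Prop) (M : mat3) (t : R) (p : pt) : Prop :=
  in_lattice M p /\ - t < fst p < 1 - t /\ in_cone D (snd p).

Definition Q (D : R2 -> Prop) (M : mat3) (p : pt) : Prop :=
  in_lattice M p /\ Rabs (fst p) < 1 /\ in_cone D (snd p).

Definition F_is (D : R2 -> Prop) (M : mat3) (t delta : R) : Prop :=
  (exists p, Qt D M t p /\ norm2 (snd p) = delta) /\
  (forall p, Qt D M t p -> delta <= norm2 (snd p)).

Definition in_FD (D : R2 -> Prop) (M : mat3) (delta : R) : Prop :=
  exists t, 0 < t < 1 /\ F_is D M t delta.

Definition has_card (P : R -> Prop) (K : nat) : Prop :=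
  exists l : list R, NoDup l /\ length l = K /\ (forall x, P x <-> In x l).

Definition G_is (D : R2 -> Prop) (M : mat3) (K : nat) : Prop :=
  has_card (in_FD D M) K.

Definition angle2 (v w : R2) : R := acos (dot2 v w / (norm2 v * norm2 w)).

Definition V1 (K : nat) (v : nat -> R2) : Prop :=
  0 < norm2 (v 1%nat) /\
  (forall i, (1 <= i)%nat -> (i < K)%nat -> norm2 (v i) < norm2 (v (S i))).

Definition V2 (D : R2 -> Prop) (M : mat3) (K : nat) (v : nat -> R2) : Prop :=
  forall delta, in_FD D M delta ->
    exists i, (1 <= i <= K)%nat /\ norm2 (v i) = delta.

Definition V3 (D : R2 -> Prop) (M : mat3) (K : nat) (u : nat -> R) (v : nat -> R2) : Prop :=
  forall i, (1 <= i <= K)%nat ->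
    exists t, 0 < t < 1 /\ Qt D M t (u i, v i) /\ F_is D M t (norm2 (v i)).

(* Every lattice point (u, w) with u >= 0, w <> 0 and |w| < F(M, t) has height
   u >= max(t, 1 - t): otherwise (u, w) or -(u, w) would lie in Q(M, t) with a
   horizontal part shorter than the minimum.  So for m < n < K the heights of
   v_m and v_n both lie in [max(t, 1 - t), 1) for the parameter t of v_K; their
   difference then lies in Q(M, t), whence |v_m - v_n| >= |v_K| > |v_n| >= |v_m|.
   The side opposite the angle between v_m and v_n is thus the longest side of
   their triangle, so that angle exceeds pi/3.  If v_i = a v_j + b v_k with
   a, b >= 0, the same separations force a + b >= 2; then v_j + v_k - v_i is a
   nonzero vector shorter than v_k, and the height of the lattice point
   (u_j + u_k - u_i, v_j + v_k - v_i) lies in the window of the parameter of v_k,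
   contradicting the minimality of |v_k|. *)

From Stdlib Require Import Reals Lra Lia Psatz.
Open Scope R_scope.

Definition vadd (v w : R2) : R2 := (fst v + fst w, snd v + snd w).
Definition vsub (v w : R2) : R2 := (fst v - fst w, snd v - snd w).
Definition vscale (a : R) (v : R2) : R2 := (a * fst v, a * snd v).

Lemma dot2_self_nonneg v : 0 <= dot2 v v.
Proof. unfold dot2; nra. Qed.

Lemma norm2_nonneg v : 0 <= norm2 v.
Proof. apply sqrt_pos. Qed.

Lemma norm2_sqr v : norm2 v * norm2 v = dot2 v v.
Proof. apply sqrt_sqrt, dot2_self_nonneg. Qed.

Lemma norm2_lt v w : norm2 v < norm2 w <-> dot2 v v < dot2 w w.
Proof.
  split.
  - apply sqrt_lt_0_alt.
  - intros H; apply sqrt_lt_1_alt; split; [apply dot2_self_nonneg | exact H].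
Qed.

Lemma norm2_pos v : v <> (0, 0) -> 0 < norm2 v.
Proof.
  destruct v as [x y]; intros Hv.
  apply sqrt_lt_R0; unfold dot2; simpl.
  destruct (Req_dec x 0) as [-> | Hx]; [destruct (Req_dec y 0) as [-> | Hy] |].
  - now contradiction Hv.
  - nra.
  - nra.
Qed.

Lemma norm2_vsub_pos v w : norm2 v <> norm2 w -> 0 < norm2 (vsub v w).
Proof.
  intros Hvw; apply norm2_pos; intros H0.
  destruct v as [x y], w as [x' y']; unfold vsub in H0; simpl in H0.
  injection H0 as Hx Hy.
  apply Hvw; f_equal; f_equal; lra.
Qed.

Lemma dot2_ge_neg_norm2_mul v w : - (norm2 v * norm2 w) <= dot2 v w.
Proof.
  pose proof (norm2_sqr v) as Hv; pose proof (norm2_sqr w) as Hw.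
  pose proof (norm2_nonneg v); pose proof (norm2_nonneg w).
  assert (Hlagrange : (norm2 v * norm2 w) * (norm2 v * norm2 w) - dot2 v w * dot2 v w
                      = (fst v * snd w - snd v * fst w) ^ 2).
  { replace ((norm2 v * norm2 w) * (norm2 v * norm2 w))
      with ((norm2 v * norm2 v) * (norm2 w * norm2 w)) by ring.
    rewrite Hv, Hw; unfold dot2; ring. }
  assert (0 <= norm2 v * norm2 w) by nra.
  destruct (Rle_or_lt (- (norm2 v * norm2 w)) (dot2 v w)) as [Hle | Hlt]; [exact Hle |].
  pose proof (pow2_ge_0 (fst v * snd w - snd v * fst w)).
  nra.
Qed.

Lemma dot2_lt_of_norm2_lt_vsub v w :
  norm2 w < norm2 (vsub v w) -> 2 * dot2 v w < dot2 v v.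
Proof.
  intros H%norm2_lt.
  destruct v, w; unfold vsub, dot2 in *; simpl in *; nra.
Qed.

Lemma acos_gt_PI3 x : x < 1 / 2 -> PI / 3 < acos x.
Proof.
  intros Hx; pose proof PI_RGT_0.
  destruct (Rle_dec x (-1)) as [Hle | Hgt].
  - unfold acos; destruct (Rle_dec x (-1)); [lra | contradiction].
  - pose proof (acos_bound x).
    apply cos_decreasing_0; try lra.
    rewrite cos_acos, cos_PI3 by lra; exact Hx.
Qed.

Lemma angle2_gt_PI3 v w :
  0 < norm2 v -> norm2 v <= norm2 w -> norm2 w < norm2 (vsub v w) ->
  angle2 v w > PI / 3.
Proof.
  intros Hv Hvw Hfar%dot2_lt_of_norm2_lt_vsub.
  rewrite <- norm2_sqr in Hfar.
  apply acos_gt_PI3.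
  assert (Hprod : 0 < norm2 v * norm2 w) by nra.
  apply (Rmult_lt_reg_r (norm2 v * norm2 w)); [exact Hprod |].
  unfold Rdiv; rewrite Rmult_assoc, Rinv_l by lra; nra.
Qed.

Lemma cone_reflection_short x y a b z :
  0 <= a -> 0 <= b -> z = vadd (vscale a x) (vscale b y) ->
  0 < norm2 z -> norm2 z < norm2 x -> norm2 x < norm2 y ->
  norm2 x < norm2 (vsub z x) -> norm2 y < norm2 (vsub z y) ->
  0 < norm2 (vsub (vadd x y) z) < norm2 y.
Proof.
  intros Ha Hb Hz Hz0 Hzx Hxy Hfarx%dot2_lt_of_norm2_lt_vsub Hfary%dot2_lt_of_norm2_lt_vsub.
  pose proof (norm2_sqr x) as Hp; pose proof (norm2_sqr y) as Hq;
    pose proof (norm2_sqr z) as Hr.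
  pose proof (norm2_nonneg x); pose proof (dot2_ge_neg_norm2_mul x y) as Hcs.
  set (p := norm2 x) in *; set (q := norm2 y) in *; set (r := norm2 z) in *.
  assert (Hsplit : dot2 z z = a * dot2 z x + b * dot2 z y)
    by (subst z; unfold vadd, vscale, dot2; simpl; ring).
  assert (Hzz : 0 < dot2 z z) by nra.
  assert (Hab : 2 <= a + b).
  { assert (a * (2 * dot2 z x) <= a * dot2 z z) by (apply Rmult_le_compat_l; lra).
    assert (b * (2 * dot2 z y) <= b * dot2 z z) by (apply Rmult_le_compat_l; lra).
    nra. }
  assert (Hexp : dot2 z z = a * a * (p * p) + 2 * a * b * dot2 x y + b * b * (q * q))
    by (rewrite Hp, Hq; subst z; unfold vadd, vscale, dot2; simpl; ring).
  assert (Hdiff : (a * p - b * q) * (a * p - b * q) < p * p).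
  { assert (0 <= 2 * a * b * (dot2 x y + p * q)) by (apply Rmult_le_pos; nra).
    nra. }
  split.
  - apply norm2_pos; intros H0.
    assert (Hsum : dot2 z x + dot2 z y = dot2 z z).
    { destruct x, y, z; unfold vadd, vsub, dot2 in *; simpl in *.
      injection H0 as H1 H2; nra. }
    lra.
  - apply norm2_lt.
    assert (Hw : dot2 (vsub (vadd x y) z) (vsub (vadd x y) z)
                 = (1 - 2 * a) * (p * p) + (1 - 2 * b) * (q * q) + r * r
                   - 2 * (a + b - 1) * dot2 x y).
    { rewrite Hp, Hq, Hr; subst z; unfold vadd, vsub, vscale, dot2; simpl; ring. }
    rewrite Hw, <- Hq.
    (* Cauchy-Schwarz and |z| < |x| bound |x + y - z|^2 - |y|^2 by
       2 (|x| - |y|) (|x| + b |y| - a |x|), which is negative because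
       |a |x| - b |y|| <= |z| < |x|. *)
    assert (Hc : - (a + b - 1) * (p * q) <= (a + b - 1) * dot2 x y) by nra.
    assert (Hbal : 0 < p + b * q - a * p) by nra.
    assert (0 < (q - p) * (p + b * q - a * p)) by (apply Rmult_lt_0_compat; lra).
    assert (r * r < p * p) by nra.
    nra.
Qed.

Definition padd (p q : pt) : pt := (fst p + fst q, vadd (snd p) (snd q)).
Definition psub (p q : pt) : pt := (fst p - fst q, vsub (snd p) (snd q)).
Definition popp (p : pt) : pt := (- fst p, vscale (-1) (snd p)).

Lemma in_lattice_add M p q : in_lattice M p -> in_lattice M q -> in_lattice M (padd p q).
Proof.
  intros [a0 [a1 [a2 ->]]] [b0 [b1 [b2 ->]]].
  exists (a0 + b0)%Z, (a1 + b1)%Z, (a2 + b2)%Z.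
  rewrite !plus_IZR; unfold padd, vadd, rowmul; simpl; f_equal; [ring | f_equal; ring].
Qed.

Lemma in_lattice_sub M p q : in_lattice M p -> in_lattice M q -> in_lattice M (psub p q).
Proof.
  intros [a0 [a1 [a2 ->]]] [b0 [b1 [b2 ->]]].
  exists (a0 - b0)%Z, (a1 - b1)%Z, (a2 - b2)%Z.
  rewrite !minus_IZR; unfold psub, vsub, rowmul; simpl; f_equal; [ring | f_equal; ring].
Qed.

Lemma in_lattice_opp M p : in_lattice M p -> in_lattice M (popp p).
Proof.
  intros [a0 [a1 [a2 ->]]].
  exists (- a0)%Z, (- a1)%Z, (- a2)%Z.
  rewrite !opp_IZR; unfold popp, vscale, rowmul; simpl; f_equal; [ring | f_equal; ring].
Qed.

Lemma norm2_vscale a v : norm2 (vscale a v) = Rabs a * norm2 v.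
Proof.
  unfold norm2; rewrite <- sqrt_Rsqr_abs, <- sqrt_mult_alt by apply Rle_0_sqr.
  f_equal; unfold Rsqr, dot2, vscale; simpl; ring.
Qed.

Lemma in_cone_unit_circle v : in_cone unit_circle v <-> 0 < norm2 v.
Proof.
  split.
  - intros [r [d [Hr [Hd ->]]]].
    change (0 < norm2 (vscale r d)); rewrite norm2_vscale, Hd, Rabs_pos_eq; lra.
  - intros Hv; exists (norm2 v), (vscale (/ norm2 v) v).
    split; [exact Hv | split].
    + unfold unit_circle; rewrite norm2_vscale, Rabs_pos_eq.
      * apply Rinv_l; lra.
      * left; apply Rinv_0_lt_compat, Hv.
    + destruct v; unfold vscale; simpl; f_equal; field; lra.
Qed.

Lemma F_is_le M t L p :
  F_is unit_circle M t L -> in_lattice M p -> - t < fst p < 1 - t ->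
  0 < norm2 (snd p) -> L <= norm2 (snd p).
Proof.
  intros [_ Hmin] Hp Hwin Hpos.
  apply Hmin; repeat split; try apply Hwin; [exact Hp | now apply in_cone_unit_circle].
Qed.

Lemma short_point_height M t L u w :
  0 < t < 1 -> F_is unit_circle M t L -> in_lattice M (u, w) -> 0 <= u ->
  0 < norm2 w -> norm2 w < L -> t <= u /\ 1 - t <= u.
Proof.
  intros Ht HF Hp Hu Hw HwL; split.
  - destruct (Rle_or_lt t u) as [Hle | Hlt]; [exact Hle | exfalso].
    assert (Hnorm : norm2 (snd (popp (u, w))) = norm2 w)
      by (simpl; rewrite norm2_vscale, Rabs_left; lra).
    assert (L <= norm2 (snd (popp (u, w)))).
    { apply (F_is_le M t); [exact HF | now apply in_lattice_opp | simpl; lra | lra]. }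
    lra.
  - destruct (Rle_or_lt (1 - t) u) as [Hle | Hlt]; [exact Hle | exfalso].
    assert (L <= norm2 w) by (apply (F_is_le M t L (u, w)); simpl; auto; lra).
    lra.
Qed.

Lemma short_points_far_apart M t L u w u' w' :
  0 < t < 1 -> F_is unit_circle M t L ->
  in_lattice M (u, w) -> in_lattice M (u', w') ->
  0 <= u < 1 -> 0 <= u' < 1 ->
  0 < norm2 w < L -> 0 < norm2 w' < L -> norm2 w <> norm2 w' ->
  L <= norm2 (vsub w w').
Proof.
  intros Ht HF Hp Hp' Hu Hu' Hw Hw' Hww'.
  destruct (short_point_height M t L u w) as [Ht1 Ht2]; try tauto.
  destruct (short_point_height M t L u' w') as [Ht1' Ht2']; try tauto.
  apply (F_is_le M t L (psub (u, w) (u', w'))); simpl.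
  - exact HF.
  - now apply in_lattice_sub.
  - lra.
  - now apply norm2_vsub_pos.
Qed.

Lemma V1_norm2_lt K v m n :
  V1 K v -> (1 <= m)%nat -> (m < n)%nat -> (n <= K)%nat -> norm2 (v m) < norm2 (v n).
Proof.
  intros [_ Hstep] Hm Hmn HnK; induction n as [| n IH]; [lia |].
  destruct (Nat.eq_dec m n) as [-> | Hne]; [apply Hstep; lia |].
  apply Rlt_trans with (norm2 (v n)); [apply IH | apply Hstep]; lia.
Qed.

Lemma V1_norm2_pos K v m : V1 K v -> (1 <= m <= K)%nat -> 0 < norm2 (v m).
Proof.
  intros HV1 Hm; destruct (Nat.eq_dec m 1) as [-> | Hne]; [apply HV1 |].
  apply Rlt_trans with (norm2 (v 1%nat)); [apply HV1 | apply (V1_norm2_lt K)]; auto; lia.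
Qed.

Section Successive_minima.

Variables (M : mat3) (K : nat) (u : nat -> R) (v : nat -> R2).
Hypothesis HQ : forall i, (1 <= i <= K)%nat -> Q unit_circle M (u i, v i).
Hypothesis HV1 : V1 K v.
Hypothesis HV3 : V3 unit_circle M K u v.
Hypothesis Hu : forall i, (1 <= i <= K)%nat -> 0 <= u i.

Lemma minimum_height m t L :
  (1 <= m <= K)%nat -> 0 < t < 1 -> F_is unit_circle M t L -> norm2 (v m) < L ->
  t <= u m /\ 1 - t <= u m /\ u m < 1.
Proof.
  intros Hm Ht HF HmL.
  destruct (HQ m Hm) as [Hlat [Habs _]]; apply Rabs_def2 in Habs; simpl in Habs.
  destruct (short_point_height M t L (u m) (v m)); auto.
  - now apply (V1_norm2_pos K).
  - repeat split; lra.
Qed.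

Lemma minima_far_apart m n :
  (1 <= m)%nat -> (m < n)%nat -> (n <= K - 1)%nat ->
  norm2 (v K) <= norm2 (vsub (v m) (v n)).
Proof.
  intros Hm Hmn HnK.
  destruct (HV3 K) as [t [Ht [_ HF]]]; [lia |].
  destruct (minimum_height m t (norm2 (v K))) as [_ [_ Hum]]; auto; try lia.
  { apply (V1_norm2_lt K); auto; lia. }
  destruct (minimum_height n t (norm2 (v K))) as [_ [_ Hun]]; auto; try lia.
  { apply (V1_norm2_lt K); auto; lia. }
  apply (short_points_far_apart M t _ (u m) _ (u n)); auto.
  - apply HQ; lia.
  - apply HQ; lia.
  - split; [apply Hu; lia | exact Hum].
  - split; [apply Hu; lia | exact Hun].
  - split; [apply (V1_norm2_pos K) | apply (V1_norm2_lt K)]; auto; lia.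
  - split; [apply (V1_norm2_pos K) | apply (V1_norm2_lt K)]; auto; lia.
  - apply Rlt_not_eq, (V1_norm2_lt K); auto; lia.
Qed.

Lemma minima_angle_gt_PI3 i j :
  (1 <= i)%nat -> (i < j)%nat -> (j <= K - 1)%nat -> angle2 (v i) (v j) > PI / 3.
Proof.
  intros Hi Hij HjK.
  apply angle2_gt_PI3.
  - apply (V1_norm2_pos K); auto; lia.
  - left; apply (V1_norm2_lt K); auto; lia.
  - apply Rlt_le_trans with (norm2 (v K)); [apply (V1_norm2_lt K); auto; lia |].
    now apply minima_far_apart.
Qed.

Lemma minima_not_in_cone i j k :
  (1 <= i)%nat -> (i < j)%nat -> (j < k)%nat -> (k <= K - 1)%nat ->
  ~ (exists a b, 0 <= a /\ 0 <= b /\ v i = vadd (vscale a (v j)) (vscale b (v k))).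
Proof.
  intros Hi Hij Hjk HkK [a [b [Ha [Hb Hvi]]]].
  destruct (HV3 k) as [tk [Htk [[_ [Hwink _]] HFk]]]; [lia |]; simpl in Hwink.
  destruct (HV3 j) as [tj [Htj [[_ [Hwinj _]] HFj]]]; [lia |]; simpl in Hwinj.
  pose proof (Hu k ltac:(lia)).
  destruct (minimum_height i tk (norm2 (v k))); auto; try lia.
  { apply (V1_norm2_lt K); auto; lia. }
  destruct (minimum_height j tk (norm2 (v k))); auto; try lia.
  { apply (V1_norm2_lt K); auto; lia. }
  destruct (minimum_height i tj (norm2 (v j))); auto; try lia.
  { apply (V1_norm2_lt K); auto; lia. }
  assert (Hlat : in_lattice M (psub (padd (u j, v j) (u k, v k)) (u i, v i)))
    by (apply in_lattice_sub; [apply in_lattice_add |]; apply HQ; lia).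
  destruct (cone_reflection_short (v j) (v k) a b (v i)) as [Hpos Hshort]; auto.
  - apply (V1_norm2_pos K); auto; lia.
  - apply (V1_norm2_lt K); auto; lia.
  - apply (V1_norm2_lt K); auto; lia.
  - apply Rlt_le_trans with (norm2 (v K)); [apply (V1_norm2_lt K); auto; lia |].
    apply minima_far_apart; lia.
  - apply Rlt_le_trans with (norm2 (v K)); [apply (V1_norm2_lt K); auto; lia |].
    apply minima_far_apart; lia.
  - assert (norm2 (v k) <= norm2 (vsub (vadd (v j) (v k)) (v i))).
    { apply (F_is_le M tk _ _ HFk Hlat); simpl; [lra | exact Hpos]. }
    lra.
Qed.

End Successive_minima.

Theorem proposition5p3 (M : mat3) (K : nat) (u : nat -> R) (v : nat -> R2) :
  SL3 M ->
  G_is unit_circle M K ->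
  (forall i, (1 <= i <= K)%nat -> Q unit_circle M (u i, v i)) ->
  V1 K v ->
  V2 unit_circle M K v ->
  V3 unit_circle M K u v ->
  (forall i, (1 <= i <= K)%nat -> 0 <= u i) ->
  (forall i j, (1 <= i)%nat -> (i < j)%nat -> (j <= K - 1)%nat ->
     angle2 (v i) (v j) > PI / 3) /\
  (forall i j k, (1 <= i)%nat -> (i < j)%nat -> (j < k)%nat -> (k <= K - 1)%nat ->
     ~ (exists a b, 0 <= a /\ 0 <= b /\
          v i = (a * fst (v j) + b * fst (v k), a * snd (v j) + b * snd (v k)))).
Proof.
  intros _ _ HQ HV1 _ HV3 Hu.
  split.
  - intros i j; apply (minima_angle_gt_PI3 M K u v HQ HV1 HV3 Hu).
  - intros i j k; apply (minima_not_in_cone M K u v HQ HV1 HV3 Hu).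
Qed.
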